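(* Let $A$ be a set of regular cardinals with $\operatorname{ot}(A)<\mu:=\sup(A)$ such that every $a\in A$ carries a Jónsson algebra, and suppose $\mu^+\in\operatorname{spec}^*(A)$. Then $\mu^+$ carries a Jónsson algebra.
   Context: An algebra is a structure $\langle X,f_n\rangle_{n<\omega}$ where each $f_n$ is a finitary function from $X$ to $X$; a Jónsson algebra is an algebra with no proper subalgebra of the same cardinality; a cardinal $\lambda$ carries a Jónsson algebra if there is a Jónsson algebra of cardinality $\lambda$. For a set $A$ of regular cardinals, $\prod A$ is the set of functions on $A$ with $f(a)\in a$; for $\mathcal{G}\subseteq\prod A$, $\operatorname{ub}(\mathcal{G})$ is the set of $a\in A$ with $\{f(a):f\in\mathcal{G}\}$ unbounded in $a$. $\operatorname{spec}^*(A)$ is the set of regular $\lambda$ such that there is $\mathcal{F}\subseteq\prod A$ of size $\lambda$ such that for every $\mathcal{F}_0\subseteq\mathcal{F}$ of size $\lambda$, $\operatorname{ub}(\mathcal{F}_0)$ is unbounded in $\sup(A)$. $\operatorname{ot}(A)$ is the order type of $A$. *)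

From mathcomp Require Import all_boot.
From mathcomp Require Import boolp classical_sets cardinality.
Set Implicit Arguments. Unset Strict Implicit. Unset Printing Implicit Defensive.
Local Open Scope classical_set_scope.

(* Cardinals and ordinals are modelled inside an arbitrary strict
   well-order W: a cardinal is an initial element of W, identified with
   the set of its predecessors. All notions below only depend on the
   order type of initial segments, hence agree with the usual ones. *)
Record WellOrder := {
  wcar :> Type;
  wlt : wcar -> wcar -> Prop;
  wlt_irrefl : forall x, ~ wlt x x;
  wlt_trans : forall x y z, wlt x y -> wlt y z -> wlt x z;
  wlt_total : forall x y, wlt x y \/ x = y \/ wlt y x;
  wlt_wf : well_founded wlt }.

Section Defs.
Variable W : WellOrder.
Local Notation "x <w y" := (wlt x y) (at level 70).
Definition wle (x y : W) := x <w y \/ x = y.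
Local Notation "x <=w y" := (wle x y) (at level 70).

Definition seg (x : W) : set W := [set y | y <w x].

Definition is_cardinal (x : W) : Prop :=
  forall y, y <w x -> ~ card_eq (seg y) (seg x).

Definition is_regular (x : W) : Prop :=
  is_cardinal x /\ ~ finite_set (seg x) /\
  forall C : set W, C `<=` seg x ->
    (forall y, y <w x -> exists2 c, C c & y <=w c) -> card_eq C (seg x).

Definition is_sup (A : set W) (mu : W) : Prop :=
  (forall a, A a -> a <=w mu) /\
  (forall b, (forall a, A a -> a <=w b) -> mu <=w b).

Definition ot_lt (A : set W) (mu : W) : Prop :=
  exists2 beta, beta <w mu &
    exists h : W -> W,
      (forall a, A a -> h a <w beta) /\
      (forall g, g <w beta -> exists2 a, A a & h a = g) /\
      (forall a b, A a -> A b -> a <w b -> h a <w h b).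

Definition is_succ_card (mu mup : W) : Prop :=
  is_cardinal mup /\ mu <w mup /\
  (forall c, is_cardinal c -> mu <w c -> mup <=w c).

(* elements of prod A: functions with f a < a for a in A, and
   (canonical representative) f x = x off A *)
Definition in_prod (A : set W) (f : W -> W) : Prop :=
  (forall a, A a -> f a <w a) /\ (forall x, ~ A x -> f x = x).

Definition ub (A : set W) (G : set (W -> W)) : set W :=
  [set a | A a /\ forall g, g <w a -> exists2 f, G f & g <=w f a].

Definition in_spec_star (A : set W) (lambda : W) : Prop :=
  is_regular lambda /\
  exists F : set (W -> W),
    (forall f, F f -> in_prod A f) /\ card_eq F (seg lambda) /\
    forall F0 : set (W -> W), F0 `<=` F -> card_eq F0 (seg lambda) ->
      forall mu, is_sup A mu ->
        forall b, b <w mu -> exists2 a, ub A F0 a & b <w a.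
End Defs.

Definition jonsson_algebra (X : Type) (k : nat -> nat)
    (f : forall n, ('I_(k n) -> X) -> X) : Prop :=
  forall Y : set X,
    (forall n (v : 'I_(k n) -> X), (forall i, Y (v i)) -> Y (f n v)) ->
    card_eq Y [set: X] -> Y = [set: X].

Definition carries_jonsson_type (X : Type) : Prop :=
  exists (k : nat -> nat) (f : forall n, ('I_(k n) -> X) -> X),
    jonsson_algebra f.

Definition carries_jonsson (W : WellOrder) (lambda : W) : Prop :=
  carries_jonsson_type {x : W | wlt x lambda}.

From HB Require Import structures.
From mathcomp Require Import all_boot.
From mathcomp Require Import boolp classical_sets functions cardinality.
From Stdlib Require List.
Set Implicit Arguments. Unset Strict Implicit. Unset Printing Implicit Defensive.
Local Open Scope classical_set_scope.
Local Open Scope card_scope.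

(** It suffices to find countably many finitary operations on mu^+ such that
   every subset M of size mu^+ closed under them is all of mu^+.  Being of full
   size, M is cofinal in mu^+, and the spec* family psi gives, for every b < mu,
   some a in A above b on which the functions psi x, x in M, are unbounded.  For
   a in A, the Jonsson algebra on a and the regularity of a put all of a into M
   as soon as a is in M and M is cofinal in a.  Now ot(A) < mu gives beta < mu
   and an injection of A into beta; pick a0 in A above beta.  M is cofinal in
   a0: otherwise its supremum s < a0 is the value at some a in A of a term in
   the Jonsson operations of a applied to values psi x a (x in M), and since
   |A| <= |beta| < a0 with a0 regular, one operation bounds below a0 the values
   of that term at all a in A, producing an element of M in (s, a0).  Hence
   beta, then A, then mu lie in M, and finally every g < mu^+, which is
   enumerated by mu from some d >= g in M. *)

Local Notation "x <w y" := (wlt x y) (at level 70).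
Local Notation "x <=w y" := (wle x y) (at level 70).

Lemma card_eq_set_bij T U (A : set T) (B : set U) (d : U) :
  A #= B -> exists f : T -> U, set_bij A B f.
Proof. by move=> /card_bijP[f /(valLR_bijP d)]; exists (valLR d f). Qed.

Lemma card_eq_sig_image T (P : T -> Prop) (Y : set {x | P x}) :
  sval @` Y #= Y.
Proof. by apply: inj_card_eq => -[x p] [y q] _ _ /= xy; apply: eq_exist. Qed.

Lemma sig_image_setT T (P : T -> Prop) : sval @` [set: {x | P x}] = P.
Proof.
by apply/seteqP; split=> [_ [[x p] _ <-] //|x p]; exists (exist _ x p).
Qed.

Definition ord_ext T (d : T) m (v : 'I_m -> T) (j : nat) : T :=
  if insub j is Some i then v i else d.

Lemma ord_ext_ord T (d : T) m (v : 'I_m -> T) (i : 'I_m) : ord_ext d v i = v i.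
Proof. by rewrite /ord_ext valK. Qed.

Section WellOrderTheory.
Variable W : WellOrder.
Implicit Types (x y z a b : W) (Z : set W).

Lemma wlt_asym x y : x <w y -> ~ y <w x.
Proof. by move=> xy yx; apply: (wlt_irrefl (wlt_trans xy yx)). Qed.

Lemma wltW x y : x <w y -> x <=w y.
Proof. by left. Qed.

Lemma wle_lt_trans x y z : x <=w y -> y <w z -> x <w z.
Proof. by case=> [xy yz|->]; first exact: wlt_trans xy yz. Qed.

Lemma wlt_le_trans x y z : x <w y -> y <=w z -> x <w z.
Proof. by move=> xy [yz|<-]; first exact: wlt_trans xy yz. Qed.

Lemma wle_trans x y z : x <=w y -> y <=w z -> x <=w z.
Proof. by move=> xy [yz|<-]; first exact/wltW/(wle_lt_trans xy yz). Qed.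

Lemma wle_ngt x y : x <=w y -> ~ y <w x.
Proof. by move=> xy yx; apply: (wlt_irrefl (wle_lt_trans xy yx)). Qed.

Lemma wltNge x y : ~ y <=w x -> x <w y.
Proof.
by move=> yx; have [//|[xy|xy]] := wlt_total x y; case: (yx _); [right|left].
Qed.

Lemma wleNgt x y : ~ y <w x -> x <=w y.
Proof.
by move=> yx; have [xy|[->|/yx//]] := wlt_total x y; [left|right].
Qed.

Lemma wlt_least (P : W -> Prop) :
  (exists x, P x) -> exists x, P x /\ forall y, y <w x -> ~ P y.
Proof.
move=> [x Px]; apply: contrapT => nomin.
elim/(well_founded_ind (@wlt_wf W)): x Px => x IH Px.
by apply: nomin; exists x; split=> // y /IH.
Qed.

Lemma seg_le x y : x <=w y -> seg x `<=` seg y.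
Proof. by move=> xy z zx; apply: wlt_le_trans zx xy. Qed.

Definition cofinal_in Z a := forall y, y <w a -> exists2 c, Z c /\ c <w a & y <=w c.

Lemma bounded_of_not_cofinal Z a :
  ~ cofinal_in Z a -> exists2 s, s <w a & forall c, Z c -> c <w a -> c <w s.
Proof.
move=> ncof; apply: contrapT => nbound; apply: ncof => y ya.
apply: contrapT => nabove; apply: nbound; exists y => // c Zc ca.
by apply: wltNge => yc; apply: nabove; exists c.
Qed.

Lemma regular_cofinal_card a Z :
  is_regular a -> cofinal_in Z a -> Z `&` seg a #= seg a.
Proof.
case=> _ [_ reg] cof; apply: reg => [c [] //|y /cof[c [Zc ca] yc]].
by exists c.
Qed.

Lemma cardinal_cofinal a Z :
  is_cardinal a -> Z #= seg a -> forall g, g <w a -> exists2 d, Z d & g <=w d.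
Proof.
move=> card_a Za g ga; apply: contrapT => nabove; apply: (card_a g ga).
have Zg : Z `<=` seg g by move=> d Zd; apply: wltNge => gd; apply: nabove; exists d.
rewrite card_eq_le (subset_card_le (seg_le (wltW ga))) /=.
by rewrite -(card_le_eql Za); apply: subset_card_le.
Qed.

Lemma regular_bounded_image a b (I : set W) (g : W -> W) :
  is_regular a -> b <w a -> I #<= seg b ->
  exists2 y, y <w a & forall i, I i -> g i <w a -> g i <w y.
Proof.
move=> reg_a ba Ib.
have [cof|/bounded_of_not_cofinal[y ya ybound]] := pselect (cofinal_in (g @` I) a).
  exfalso; have [card_a _] := reg_a; apply: (card_a b ba).
  rewrite card_eq_le (subset_card_le (seg_le (wltW ba))) /=.
  rewrite -(card_le_eql (regular_cofinal_card reg_a cof)).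
  apply: card_le_trans (subset_card_le (@subIsetl _ _ _)) _.
  exact: card_le_trans (card_image_le _ _) Ib.
by exists y => // i Ii gia; apply: ybound => //; exists i.
Qed.

End WellOrderTheory.

Section SuccessorCardinal.
Variables (W : WellOrder) (mu mup : W).
Hypothesis mup_succ : is_succ_card mu mup.

Lemma succ_card_gt : mu <w mup.
Proof. by case: mup_succ => _ []. Qed.

Lemma succ_card_seg g : mu <=w g -> g <w mup -> seg g #= seg mu.
Proof.
move=> mug gmup.
have [d [dg dmin]] := wlt_least (ex_intro (fun d => seg d #= seg g) g (card_eqxx _)).
have card_d : is_cardinal d.
  by move=> y yd yd_eq; apply: (dmin y yd); apply: card_eq_trans yd_eq dg.
have d_le_g : d <=w g by apply: wleNgt => gd; apply: (dmin g gd).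
have d_le_mu : d <=w mu.
  apply: wleNgt => mud; case: mup_succ => _ [_ least].
  exact: wle_ngt (wle_trans (least d card_d mud) d_le_g) gmup.
rewrite card_eq_le (subset_card_le (seg_le mug)) andbT.
by rewrite -(card_le_eql dg); apply: subset_card_le; apply: seg_le.
Qed.

Lemma succ_card_enum : exists e : W -> W -> W,
  forall g, mu <=w g -> g <w mup -> set_bij (seg mu) (seg g) (e g).
Proof.
suff /choice[e e_bij] : forall g, exists f : W -> W,
    mu <=w g -> g <w mup -> set_bij (seg mu) (seg g) f by exists e.
move=> g; have [gmu|ngmu] := pselect (mu <=w g /\ g <w mup); last first.
  by exists id => mug gmup; case: ngmu.
have [f fbij] := card_eq_set_bij mu (card_esym (succ_card_seg gmu.1 gmu.2)).
by exists f.
Qed.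

End SuccessorCardinal.

Definition jonsson_ops (W : WellOrder) (a : W) (k : nat -> nat)
    (f : forall n, ('I_(k n) -> W) -> W) : Prop :=
  (forall n v, (forall i, v i <w a) -> f n v <w a) /\
  forall Z : set W, Z `<=` seg a -> (forall n v, (forall i, Z (v i)) -> Z (f n v)) ->
    Z #= seg a -> seg a `<=` Z.
Arguments jonsson_ops {W} a k f.

Lemma carries_jonsson_ops (W : WellOrder) (a : W) :
  carries_jonsson a -> exists k f, jonsson_ops a k f.
Proof.
move=> [k [f f_jonsson]].
pose g n (v : 'I_(k n) -> W) : W :=
  if pselect (forall i, v i <w a) is left lt_a
  then sval (f n (fun i => exist _ (v i) (lt_a i))) else a.
have g_sub n (v : 'I_(k n) -> {x | x <w a}) :
    g n (fun i => sval (v i)) = sval (f n v).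
  rewrite /g; case: pselect => [lt_a|[]]; last by move=> i; exact: (proj2_sig (v i)).
  congr (sval (f n _)); apply: funext => i.
  by move: (lt_a i); case: (v i) => x p q; apply: eq_exist.
exists k, g; split=> [n v lt_a|Z Za Zclosed Zcard x xa].
  by rewrite /g; case: pselect => // lt_a'; case: (f n _).
pose Y := [set s : {x | x <w a} | Z (sval s)].
have YT : Y = setT.
  apply: f_jonsson => [n v Yv|]; first by rewrite /Y /= -g_sub; apply: Zclosed.
  apply: card_eq_trans (card_esym (card_eq_sig_image Y)) _.
  have -> : sval @` Y = Z.
    by apply/seteqP; split=> [_ [s Zs <-] //|z Zz]; exists (exist _ z (Za z Zz)).
  apply: card_eq_trans Zcard _.
  by have := card_eq_sig_image [set: {x | x <w a}]; rewrite sig_image_setT.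
by have : Y (exist _ x xa) by rewrite YT.
Qed.

Lemma jonsson_ops_family (W : WellOrder) (A : set W) :
  (forall a, A a -> carries_jonsson a) ->
  exists (kk : W -> nat -> nat) (ff : forall a n, ('I_(kk a n) -> W) -> W),
    forall a, A a -> jonsson_ops a (kk a) (ff a).
Proof.
move=> A_jonsson.
suff /choice[sel sel_ops] : forall a,
    exists p : {k : nat -> nat & forall n, ('I_(k n) -> W) -> W},
    A a -> jonsson_ops a (projT1 p) (projT2 p).
  by exists (fun a => projT1 (sel a)), (fun a => projT2 (sel a)).
move=> a; have [Aa|nAa] := pselect (A a); last first.
  by exists (existT _ (fun=> 0) (fun _ _ => a)).
by have [k [f ops]] := carries_jonsson_ops (A_jonsson a Aa); exists (existT _ k f).
Qed.

Lemma jonsson_ops_cofinal (W : WellOrder) (a : W) k f (Z : set W) :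
  is_regular a -> jonsson_ops a k f ->
  (forall n v, (forall i, Z (v i)) -> (forall i, v i <w a) -> Z (f n v)) ->
  cofinal_in Z a -> seg a `<=` Z.
Proof.
move=> reg_a [f_lt f_full] Zclosed cof x xa.
have Za_card := regular_cofinal_card reg_a cof.
have [] // := f_full (Z `&` seg a) (@subIsetr _ _ _) _ Za_card x xa.
move=> n v Zv; split; last by apply: f_lt => i; case: (Zv i).
by apply: Zclosed => i; case: (Zv i).
Qed.

Section OperationsOnSegment.
Variables (W : WellOrder) (lambda : W) (K : countType) (k0 : K).
Variables (ar : K -> nat) (op : K -> (nat -> W) -> W).

Definition op_closed (M : set W) : Prop :=
  forall k x, (forall j, j < ar k -> M (x j)) -> M (op k x).

Hypothesis op_local :
  forall k x y, (forall j, j < ar k -> x j = y j) -> op k x = op k y.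
Hypothesis op_lt :
  forall k x, (forall j, j < ar k -> x j <w lambda) -> op k x <w lambda.
Hypothesis op_full : forall M, M `<=` seg lambda -> op_closed M ->
  M #= seg lambda -> seg lambda `<=` M.

Local Notation X := {x : W | x <w lambda}.
Let sym (p : nat) : K := odflt k0 (unpickle p).
Let args p (v : 'I_(ar (sym p)) -> X) : nat -> W :=
  ord_ext lambda (fun i => sval (v i)).

Let args_lt p (v : 'I_(ar (sym p)) -> X) j : j < ar (sym p) -> args v j <w lambda.
Proof.
by move=> jp; rewrite -[j]/(val (Ordinal jp)) /args ord_ext_ord; case: (v _).
Qed.

Let opX p (v : 'I_(ar (sym p)) -> X) : X :=
  exist _ (op (sym p) (args v)) (op_lt (args_lt v)).

Lemma carries_jonsson_of_ops : carries_jonsson lambda.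
Proof.
exists (fun p => ar (sym p)), opX => Y Yclosed Ycard.
pose M := sval @` Y.
have M_sub : M `<=` seg lambda by move=> _ [[x xl] _ <-].
have M_closed_sym p x : (forall j, j < ar (sym p) -> M (x j)) -> M (op (sym p) x).
  move=> Mx; have /choice[v vx] :
      forall i : 'I_(ar (sym p)), exists y, Y y /\ sval y = x i.
    by move=> i; have [y Yy yx] := Mx i (ltn_ord i); exists y.
  exists (opX v); first by apply: Yclosed => i; case: (vx i).
  apply: op_local => j jp; rewrite -[j]/(val (Ordinal jp)) /args ord_ext_ord.
  by case: (vx (Ordinal jp)).
have M_closed : op_closed M.
  by move=> k x; have := M_closed_sym (pickle k) x; rewrite /sym pickleK.
have M_card : M #= seg lambda.
  apply: card_eq_trans (card_eq_sig_image Y) (card_eq_trans Ycard _).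
  by have := card_eq_sig_image [set: X]; rewrite sig_image_setT => /card_esym.
have full := op_full M_sub M_closed M_card.
apply/seteqP; split=> // -[x xl] _; have [y Yy yx] := full x xl.
by have -> : exist _ x xl = y by case: y yx Yy => y yl /= yx _; apply: eq_exist.
Qed.

End OperationsOnSegment.

Section Terms.
Variables (T : Type) (op : nat -> seq T -> T).
Local Notation tree := (GenTree.tree nat).

Lemma in_nil_forall (P : tree -> Prop) : forall u, u \in [::] -> P u.
Proof. by []. Qed.

Lemma in_cons_forall (P : tree -> Prop) t ts :
  P t -> (forall u, u \in ts -> P u) -> forall u, u \in t :: ts -> P u.
Proof. by move=> Pt Pts u; rewrite in_cons => /orP[/eqP->|/Pts]. Qed.

(* The recursive call on a subtree must stay syntactic for the guard checker,
   hence the two helper lemmas above. *)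
Definition tree_ind_in (P : tree -> Prop) (P_leaf : forall i, P (GenTree.Leaf i))
    (P_node : forall n ts, (forall t, t \in ts -> P t) -> P (GenTree.Node n ts)) :
    forall t, P t :=
  fix IH t := match t with
  | GenTree.Leaf i => P_leaf i
  | GenTree.Node n ts => P_node n ts ((fix IHs us : forall u, u \in us -> P u :=
      if us is u :: us' then in_cons_forall (IH u) (IHs us') else @in_nil_forall P) ts)
  end.

Fixpoint tree_eval (rho : nat -> T) (t : tree) : T :=
  match t with
  | GenTree.Leaf i => rho i
  | GenTree.Node n ts => op n (map (tree_eval rho) ts)
  end.

Fixpoint tree_rename (g : nat -> nat) (t : tree) : tree :=
  match t with
  | GenTree.Leaf i => GenTree.Leaf (g i)
  | GenTree.Node n ts => GenTree.Node n (map (tree_rename g) ts)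
  end.

Fixpoint tree_nvars (t : tree) : nat :=
  match t with
  | GenTree.Leaf i => i.+1
  | GenTree.Node _ ts => foldr maxn 0 (map tree_nvars ts)
  end.

Lemma tree_eval_rename rho g t :
  tree_eval rho (tree_rename g t) = tree_eval (rho \o g) t.
Proof.
elim/tree_ind_in: t => [//|n ts IH] /=; congr (op n _).
by rewrite -map_comp; apply/eq_in_map => u /IH.
Qed.

Lemma tree_nvars_in u ts : u \in ts -> tree_nvars u <= foldr maxn 0 (map tree_nvars ts).
Proof.
elim: ts => [//|t ts IH]; rewrite in_cons /= => /orP[/eqP->|/IH]; first exact: leq_maxl.
by move=> le_u; rewrite leq_max le_u orbT.
Qed.

Lemma eq_tree_eval rho rho' t :
  (forall j, j < tree_nvars t -> rho j = rho' j) -> tree_eval rho t = tree_eval rho' t.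
Proof.
elim/tree_ind_in: t => [i /= -> //|n ts IH] /= agree; congr (op n _).
apply/eq_in_map => u uts; apply: IH => // j ju.
by apply: agree; apply: leq_trans ju (tree_nvars_in uts).
Qed.

Variable G : set T.
Hypothesis G_nonempty : G !=set0.

Definition tree_value (y : T) : Prop :=
  exists t rho, (forall j, G (rho j)) /\ tree_eval rho t = y.

Lemma tree_value_gen y : G y -> tree_value y.
Proof. by move=> Gy; exists (GenTree.Leaf 0), (fun=> y). Qed.

Lemma tree_values_seq ys : (forall y, List.In y ys -> tree_value y) ->
  exists ts rho, (forall j, G (rho j)) /\ map (tree_eval rho) ts = ys.
Proof.
elim: ys => [_|y ys IH ys_val].
  by have [g Gg] := G_nonempty; exists [::], (fun=> g).
have [t [rho [G_rho <-]]] := ys_val y (or_introl erefl).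
have [ts [rho' [G_rho' <-]]] := IH (fun y' y'ys => ys_val y' (or_intror y'ys)).
pose rho2 j := if odd j then rho' j./2 else rho j./2.
exists (tree_rename double t :: map (tree_rename (fun j => j.*2.+1)) ts), rho2.
split=> [j|/=]; first by rewrite /rho2; case: odd.
rewrite tree_eval_rename -map_comp; congr (_ :: _).
  by congr tree_eval; apply: funext => j; rewrite /rho2 /= odd_double doubleK.
apply/eq_map => u /=; rewrite tree_eval_rename; congr tree_eval.
by apply: funext => j; rewrite /rho2 /= odd_double /= uphalf_double.
Qed.

Lemma tree_value_op n ys :
  (forall y, List.In y ys -> tree_value y) -> tree_value (op n ys).
Proof.
by move=> /tree_values_seq[ts [rho [G_rho <-]]]; exists (GenTree.Node n ts), rho.
Qed.

End Terms.

Section CardinalInvariants.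
Variables (W : WellOrder) (A : set W) (mu : W).
Hypothesis A_sup : is_sup A mu.

Lemma sup_gt b : b <w mu -> exists2 a, A a & b <w a.
Proof.
move=> b_mu; apply: contrapT => nabove; case: A_sup => _ least.
apply: wle_ngt (least b _) b_mu => a Aa.
by apply: wleNgt => ba; apply: nabove; exists a.
Qed.

Lemma ot_lt_injection : ot_lt A mu ->
  exists2 beta, beta <w mu & exists h : W -> W,
    (forall a, A a -> h a <w beta) /\ {in A &, injective h}.
Proof.
move=> [beta beta_mu [h [h_lt [_ h_mono]]]]; exists beta => //; exists h.
split=> // a b /set_mem Aa /set_mem Ab hab; apply: contrapT => neq_ab.
have [ab|[//|ba]] := wlt_total a b.
  by have := h_mono a b Aa Ab ab; rewrite hab => /wlt_irrefl.
by have := h_mono b a Ab Aa ba; rewrite hab => /wlt_irrefl.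
Qed.

Lemma spec_star_unbounded mup : in_spec_star A mup ->
  exists2 psi : W -> W -> W,
    (forall x a, x <w mup -> A a -> psi x a <w a) &
    forall M, M `<=` seg mup -> M #= seg mup -> forall b, b <w mu ->
      exists2 a, A a /\ b <w a & forall g, g <w a -> exists2 x, M x & g <=w psi x a.
Proof.
move=> [_ [F [F_prod [F_card F_spec]]]].
have [psi [psi_F psi_inj _]] := card_eq_set_bij id (card_esym F_card).
exists psi => [x a xm Aa|M M_sub M_card b b_mu].
  by have [lt_a _] := F_prod _ (psi_F x xm); apply: lt_a.
have psiM_F : psi @` M `<=` F by move=> _ [x Mx <-]; apply/psi_F/M_sub.
have psiM_card : psi @` M #= seg mup.
  apply: card_eq_trans M_card; apply: inj_card_eq.
  by apply: sub_in2 psi_inj => x /set_mem/M_sub/mem_set.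
have [a [Aa a_ub] b_a] := F_spec _ psiM_F psiM_card mu A_sup b b_mu.
exists a => // g g_a; have [_ [x Mx <-] g_psi] := a_ub g g_a.
by exists x.
Qed.

End CardinalInvariants.

(* The operations on mu^+: the constant a0; an inverse of h : A -> beta; the
   spec* functions, OpApply x a = psi x a; OpEnum g x = e g x, enumerating each
   g in [mu, mu^+) by mu; the n-th Jonsson operation of the algebra on a in A,
   where m is its arity; and, for each term t, a Skolem bound below a0 for the
   values of t at all a in A. *)
Inductive opsym :=
| OpBase
| OpInv
| OpApply
| OpEnum
| OpJonsson of nat & nat
| OpBound of GenTree.tree nat.

Definition opsym_encode (o : opsym) : GenTree.tree nat :=
  match o with
  | OpBase => GenTree.Node 0 [::]
  | OpInv => GenTree.Node 1 [::]
  | OpApply => GenTree.Node 2 [::]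
  | OpEnum => GenTree.Node 3 [::]
  | OpJonsson n m => GenTree.Node 4 [:: GenTree.Leaf n; GenTree.Leaf m]
  | OpBound t => GenTree.Node 5 [:: t]
  end.

Definition opsym_decode (t : GenTree.tree nat) : option opsym :=
  match t with
  | GenTree.Node 0 [::] => Some OpBase
  | GenTree.Node 1 [::] => Some OpInv
  | GenTree.Node 2 [::] => Some OpApply
  | GenTree.Node 3 [::] => Some OpEnum
  | GenTree.Node 4 [:: GenTree.Leaf n; GenTree.Leaf m] => Some (OpJonsson n m)
  | GenTree.Node 5 [:: t] => Some (OpBound t)
  | _ => None
  end.

Lemma opsym_encodeK : pcancel opsym_encode opsym_decode.
Proof. by case. Qed.

HB.instance Definition _ := Countable.copy opsym (pcan_type opsym_encodeK).

Section Construction.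
Variables (W : WellOrder) (A : set W) (mu mup beta a0 : W) (h : W -> W).
Variables (psi e : W -> W -> W) (kk : W -> nat -> nat).
Variable ff : forall a n, ('I_(kk a n) -> W) -> W.
Arguments ff : clear implicits.

Hypothesis A_regular : forall a, A a -> is_regular a.
Hypothesis A_le_mu : forall a, A a -> a <=w mu.
Hypothesis mup_succ : is_succ_card mu mup.
Hypothesis A_a0 : A a0.
Hypothesis beta_a0 : beta <w a0.
Hypothesis h_lt : forall a, A a -> h a <w beta.
Hypothesis h_inj : {in A &, injective h}.
Hypothesis psi_lt : forall x a, x <w mup -> A a -> psi x a <w a.
Hypothesis psi_unbounded : forall M, M `<=` seg mup -> M #= seg mup ->
  forall b, b <w mu ->
    exists2 a, A a /\ b <w a & forall g, g <w a -> exists2 x, M x & g <=w psi x a.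
Hypothesis e_bij : forall g, mu <=w g -> g <w mup -> set_bij (seg mu) (seg g) (e g).
Hypothesis ff_jonsson : forall a, A a -> jonsson_ops a (kk a) (ff a).

HB.instance Definition _ := gen_eqMixin W.
HB.instance Definition _ := gen_choiceMixin W.

Lemma A_lt_mup a : A a -> a <w mup.
Proof. by move=> Aa; apply: wle_lt_trans (A_le_mu Aa) (succ_card_gt mup_succ). Qed.

Definition term_at (a : W) (rho : nat -> W) (t : GenTree.tree nat) : W :=
  tree_eval (fun n s => ff a n (fun i => nth a s i)) rho t.

Definition bounds_terms (t : GenTree.tree nat) (x : nat -> W) (y : W) : Prop :=
  forall a, A a -> let v := term_at a (fun j => psi (x j) a) t in v <w a0 -> v <w y.

Definition arity (o : opsym) : nat :=
  match o with
  | OpBase => 0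
  | OpInv => 1
  | OpApply | OpEnum => 2
  | OpJonsson _ m => m.+1
  | OpBound t => tree_nvars t
  end.

Definition op_raw (o : opsym) (x : nat -> W) : W :=
  match o with
  | OpBase => a0
  | OpInv => xget (x 0) (fun a => A a /\ h a = x 0)
  | OpApply => if `[< x 0 <w mup /\ A (x 1) >] then psi (x 0) (x 1) else x 1
  | OpEnum => if `[< mu <=w x 0 /\ x 0 <w mup /\ x 1 <w mu >]
              then e (x 0) (x 1) else x 1
  | OpJonsson n _ => if `[< A (x 0) /\ forall i : 'I_(kk (x 0) n), x i.+1 <w x 0 >]
                     then ff (x 0) n (fun i => x i.+1) else x 0
  | OpBound t => xget a0 (fun y => y <w a0 /\ bounds_terms t x y)
  end.

Definition op (o : opsym) (x : nat -> W) : W :=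
  op_raw o (fun j => if j < arity o then x j else mu).

Lemma op_local o x y : (forall j, j < arity o -> x j = y j) -> op o x = op o y.
Proof.
move=> xy; congr op_raw; apply: funext => j.
by case: ifP => // /xy.
Qed.

Lemma op_raw_lt o y : (forall j, j < arity o -> y j <w mup) -> op_raw o y <w mup.
Proof.
case: o => [||||n m|t] /= y_lt.
- exact: A_lt_mup.
- by case: xgetP => [a _ [Aa _]|_]; [apply: A_lt_mup|apply: y_lt].
- case: asboolP => [[y0 Ay1]|_]; last exact: y_lt.
  exact: wlt_trans (psi_lt y0 Ay1) (y_lt 1 isT).
- case: asboolP => [[mu_y0 [y0 y1]]|_]; last exact: y_lt.
  have [e_sub _ _] := e_bij mu_y0 y0.
  exact: wlt_trans (e_sub _ y1) y0.
- case: asboolP => [[Ay0 y_lt0]|_]; last exact: y_lt.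
  have [ff_lt _] := ff_jonsson Ay0.
  exact: wlt_trans (ff_lt _ _ y_lt0) (y_lt 0 isT).
- case: xgetP => [z _ [z_a0 _]|_]; last exact: A_lt_mup.
  exact: wlt_trans z_a0 (A_lt_mup A_a0).
Qed.

Lemma op_lt o x : (forall j, j < arity o -> x j <w mup) -> op o x <w mup.
Proof. by move=> x_lt; apply: op_raw_lt => j jo; rewrite jo; apply: x_lt. Qed.

Lemma A_card_le : A #<= seg beta.
Proof.
rewrite -(card_le_eql (inj_card_eq h_inj)).
by apply: subset_card_le => _ [a Aa <-]; apply: h_lt.
Qed.

Lemma op_bound t x : op (OpBound t) x <w a0 /\ bounds_terms t x (op (OpBound t) x).
Proof.
rewrite /op /=; set y := fun j : nat => _.
have [z z_a0 z_bound] := regular_bounded_image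
  (fun a => term_at a (fun j => psi (y j) a) t) (A_regular A_a0) beta_a0 A_card_le.
case: xgetP => [w _ [w_a0 w_bound]|/(_ z)[]]; last by split.
have agree a : term_at a (fun j => psi (y j) a) t = term_at a (fun j => psi (x j) a) t.
  by apply: eq_tree_eval => j jt; rewrite /y jt.
by split=> // a; rewrite -agree; apply: w_bound.
Qed.

Lemma op_raw_jonsson n m y a v : y 0 = a -> (forall i : 'I_(kk a n), y i.+1 = v i) ->
  A a -> (forall i, v i <w a) -> op_raw (OpJonsson n m) y = ff a n v.
Proof.
move=> /= y0 yv Aa v_lt; rewrite y0 asboolT; last by split=> // i; rewrite yv.
by congr (ff a n); apply: funext => i; rewrite yv.
Qed.

Section Closure.
Variable M : set W.
Hypothesis M_sub : M `<=` seg mup.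
Hypothesis M_closed : op_closed arity op M.
Hypothesis M_card : M #= seg mup.

Lemma M_a0 : M a0.
Proof. exact: (@M_closed OpBase (fun=> a0)). Qed.

Lemma M_apply x a : M x -> M a -> A a -> M (psi x a).
Proof.
move=> Mx Ma Aa; have M_xa j : j < 2 -> M (nth a0 [:: x; a] j) by case: j => [|[|]].
have := @M_closed OpApply _ M_xa.
by rewrite /op /= asboolT //; split=> //; apply: M_sub.
Qed.

Lemma M_enum g x : M g -> M x -> mu <=w g -> g <w mup -> x <w mu -> M (e g x).
Proof.
move=> Mg Mx mu_g g_mup x_mu.
have M_gx j : j < 2 -> M (nth a0 [:: g; x] j) by case: j => [|[|]].
have := @M_closed OpEnum _ M_gx.
by rewrite /op /= asboolT.
Qed.

Lemma M_inv a : A a -> M (h a) -> M a.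
Proof.
move=> Aa Mha; have := @M_closed OpInv (fun=> h a) (fun _ _ => Mha).
rewrite /op /=; case: xgetP => [a' _ [Aa' ha']|/(_ a)[]//].
by rewrite (h_inj (mem_set Aa') (mem_set Aa) ha').
Qed.

Lemma M_jonsson a n v :
  A a -> M a -> (forall i, M (v i)) -> (forall i, v i <w a) -> M (ff a n v).
Proof.
move=> Aa Ma Mv v_lt; pose x j := if j is j'.+1 then ord_ext a v j' else a.
have M_x j : M (x j) by case: j => [|j] //=; rewrite /ord_ext; case: insub.
have := @M_closed (OpJonsson n (kk a n)) x (fun j _ => M_x j).
rewrite /op (op_raw_jonsson (kk a n) _ _ Aa v_lt) // => i.
by rewrite ltnS ltn_ord /= ord_ext_ord.
Qed.

Lemma M_seg_of_cofinal a : A a -> M a -> cofinal_in M a -> seg a `<=` M.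
Proof.
move=> Aa Ma; apply: jonsson_ops_cofinal (A_regular Aa) (ff_jonsson Aa) _.
by move=> n v Mv v_lt; apply: M_jonsson.
Qed.

Lemma term_values_fill a : A a ->
  (forall g, g <w a -> exists2 x, M x & g <=w psi x a) ->
  forall s, s <w a -> exists t xs, (forall j, M (xs j)) /\
    term_at a (fun j => psi (xs j) a) t = s.
Proof.
move=> Aa unb s s_a; pose G := [set psi x a | x in M].
have G_nonempty : G !=set0 by exists (psi a0 a), a0; first exact: M_a0.
have [] := @jonsson_ops_cofinal _ a _ _
  (tree_value (fun n s => ff a n (fun i => nth a s i)) G)
  (A_regular Aa) (ff_jonsson Aa) _ _ s s_a.
- move=> n v Gv _; set ys := map v (enum 'I_(kk a n)).
  have -> : v = fun i => nth a ys i.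
    by apply: funext => i; rewrite (nth_map i) ?size_enum_ord // nth_ord_enum.
  by apply: (tree_value_op G_nonempty) => _ /List.in_map_iff[i [<- _]].
- move=> g g_a; have [x Mx g_psi] := unb g g_a.
  exists (psi x a) => //; split; last exact: psi_lt (M_sub Mx) Aa.
  by apply: tree_value_gen; exists x.
move=> t [rho [G_rho s_t]].
have /choice[xs xs_rho] : forall j, exists x, M x /\ psi x a = rho j.
  by move=> j; have [x Mx <-] := G_rho j; exists x.
exists t, xs; split=> [j|]; first by case: (xs_rho j).
rewrite -s_t /term_at; congr tree_eval; apply: funext => j.
by case: (xs_rho j).
Qed.

Lemma M_cofinal_a0 : cofinal_in M a0.
Proof.
apply: contrapT => /bounded_of_not_cofinal[s s_a0 s_bound].
have [a [Aa s_a] unb] := psi_unbounded M_sub M_card (wlt_le_trans s_a0 (A_le_mu A_a0)).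
have [t [xs [M_xs s_t]]] := term_values_fill Aa unb s_a.
have M_y : M (op (OpBound t) xs) by apply: M_closed => j _; apply: M_xs.
have [y_a0 y_bound] := op_bound t xs.
apply: wlt_asym (s_bound _ M_y y_a0).
by rewrite -s_t; apply: y_bound; rewrite ?s_t.
Qed.

Lemma A_sub_M : A `<=` M.
Proof.
move=> a Aa; apply: M_inv => //.
apply: (M_seg_of_cofinal A_a0 M_a0 M_cofinal_a0).
exact: wlt_trans (h_lt Aa) beta_a0.
Qed.

Lemma seg_mu_sub_M : seg mu `<=` M.
Proof.
move=> b b_mu; have [a [Aa b_a] unb] := psi_unbounded M_sub M_card b_mu.
apply: (M_seg_of_cofinal Aa (A_sub_M Aa)) b_a => g g_a.
have [x Mx g_psi] := unb g g_a.
exists (psi x a) => //; split; last exact: psi_lt (M_sub Mx) Aa.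
by apply: M_apply => //; apply: A_sub_M.
Qed.

Lemma seg_mup_sub_M : seg mup `<=` M.
Proof.
move=> g g_mup; have [g_mu|/wleNgt mu_g] := pselect (g <w mu).
  exact: seg_mu_sub_M.
have [d Md [g_d|-> //]] := cardinal_cofinal mup_succ.1 M_card g_mup.
have d_mup := M_sub Md; have mu_d := wle_trans mu_g (wltW g_d).
have [_ _ e_onto] := e_bij mu_d d_mup.
have [x x_mu <-] := e_onto g g_d.
exact: M_enum Md (seg_mu_sub_M x_mu) mu_d d_mup x_mu.
Qed.

End Closure.

Lemma succ_carries_jonsson : carries_jonsson mup.
Proof.
apply: (carries_jonsson_of_ops OpBase op_local op_lt) => M M_sub M_closed M_card.
exact: seg_mup_sub_M.
Qed.

End Construction.

Theorem theorem5p10 (W : WellOrder) (A : set W) (mu mup : W) :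
  (forall a, A a -> is_regular a) ->
  is_sup A mu ->
  ot_lt A mu ->
  (forall a, A a -> carries_jonsson a) ->
  is_succ_card mu mup ->
  in_spec_star A mup ->
  carries_jonsson mup.
Proof.
move=> A_regular A_sup A_ot A_jonsson mup_succ mup_spec.
have [beta beta_mu [h [h_lt h_inj]]] := ot_lt_injection A_ot.
have [a0 A_a0 beta_a0] := sup_gt A_sup beta_mu.
have [psi psi_lt psi_unbounded] := spec_star_unbounded A_sup mup_spec.
have [e e_bij] := succ_card_enum mup_succ.
have [kk [ff ff_jonsson]] := jonsson_ops_family A_jonsson.
have A_le_mu a : A a -> a <=w mu by case: A_sup => ub _; apply: ub.
exact: (succ_carries_jonsson A_regular A_le_mu mup_succ A_a0 beta_a0 h_lt h_inj
  psi_lt psi_unbounded e_bij ff_jonsson).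
Qed.
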